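(* Let $n,m,k$ be positive integers with $k\mid n$, let $p\in(0,1/2)$, and let $\mu_1,\dots,\mu_k\in\{0,1\}^m$ be fixed vectors satisfying the non-degeneracy assumption. Let $V=V_1\sqcup\dots\sqcup V_k$ with $|V_i|=n/k$, where every person $v\in V_i$ answers question $s\in\{1,\dots,m\}$ with $v(s)=\mu_i(s)$ with probability $1-p$ and $v(s)=1-\mu_i(s)$ with probability $p$, independently across persons and questions. Let $\mathcal P$ be the set of cuts $\{A_s^0,A_s^1\}$, $s=1,\dots,m$, with $A_s^y=\{v\in V: v(s)=y\}$. Let $a=\alpha n$ be the agreement parameter and suppose $p<a/n$. Then the probability that there is a $\mathcal P$-tangle which is not equal to any of the mindsets $\mu_1,\dots,\mu_k$ is at most $k\,m\,\exp\bigl(-2(\alpha-p)^2n/k\bigr)$.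
   Context: An orientation of $\mathcal P$ chooses one side of every cut; it is identified with $\tau\in\{0,1\}^m$ by choosing the side $A_s^{\tau(s)}$ for question $s$. An orientation $O$ is a $\mathcal P$-tangle if for all (not necessarily distinct) chosen sides $A,B,C\in O$ we have $|A\cap B\cap C|\ge a$. Non-degeneracy assumption: whenever $\tau\in\{0,1\}^m$ has the property that for all $x,y,z\in\{1,\dots,m\}$ there exists a mindset $\mu_i$ with $\tau(x)=\mu_i(x)$, $\tau(y)=\mu_i(y)$ and $\tau(z)=\mu_i(z)$, then $\tau=\mu_j$ for some $j$. The probability is over the random answers. *)

From HB Require Import structures.
From mathcomp Require Import all_boot all_order all_algebra.
From mathcomp Require Import reals.
From mathcomp Require Import sequences exp.
Set Implicit Arguments. Unset Strict Implicit. Unset Printing Implicit Defensive.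
Import Order.TTheory GRing.Theory Num.Theory.
Local Open Scope ring_scope.

(* An answer profile: person v : 'I_n answers question s : 'I_m with
   the bit  w (v, s). *)
Definition answers (n m : nat) := {ffun 'I_n * 'I_m -> bool}.

Definition side (n m : nat) (w : answers n m) (s : 'I_m) (y : bool) : {set 'I_n} :=
  [set v | w (v, s) == y].

(* An orientation tau (tau s chooses A_s^(tau s)) is a P-tangle with
   agreement parameter a if any three chosen sides meet in >= a persons. *)
Definition is_tangle (R : realType) (n m : nat) (a : R) (w : answers n m)
    (tau : {ffun 'I_m -> bool}) : bool :=
  [forall x : 'I_m, forall y : 'I_m, forall z : 'I_m,
     a <= (#|side w x (tau x) :&: side w y (tau y) :&: side w z (tau z)|)%:R].

Definition mindsets_nondegenerate (m k : nat) (mu : 'I_k -> {ffun 'I_m -> bool}) : Prop :=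
  forall tau : {ffun 'I_m -> bool},
    (forall x y z : 'I_m, exists i : 'I_k,
        [/\ tau x = mu i x, tau y = mu i y & tau z = mu i z]) ->
    exists j : 'I_k, tau = mu j.

(* Probability of an answer profile: person v in group c v answers question s
   with mu_(c v)(s) w.p. 1-p and with the opposite bit w.p. p, independently. *)
Definition weight (R : realType) (n m k : nat) (p : R)
    (mu : 'I_k -> {ffun 'I_m -> bool}) (c : 'I_n -> 'I_k) (w : answers n m) : R :=
  \prod_(vs : 'I_n * 'I_m)
     (if w vs == mu (c vs.1) vs.2 then 1 - p else p).

Definition bad_event (R : realType) (n m k : nat) (a : R)
    (mu : 'I_k -> {ffun 'I_m -> bool}) (w : answers n m) : bool :=
  [exists tau : {ffun 'I_m -> bool},
     is_tangle a w tau && [forall j : 'I_k, tau != mu j]].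

Definition prob_bad (R : realType) (n m k : nat) (p a : R)
    (mu : 'I_k -> {ffun 'I_m -> bool}) (c : 'I_n -> 'I_k) : R :=
  \sum_(w : answers n m | bad_event a mu w) weight p mu c w.

From HB Require Import structures.
From mathcomp Require Import all_boot all_order all_algebra.
From mathcomp Require Import reals.
From mathcomp Require Import sequences exp.
From mathcomp Require Import topology normedtype derive realfun.
From mathcomp Require Import ring lra.
Set Implicit Arguments. Unset Strict Implicit. Unset Printing Implicit Defensive.
Import Order.TTheory GRing.Theory Num.Theory.
Import numFieldNormedType.Exports.
Local Open Scope ring_scope.

(* A tangle tau that is no mindset has, by non-degeneracy, three questions
   x, y, z on which no mindset agrees with it, so every person in the triple
   intersection of its sides deviates from the mindset of their own group on
   one of x, y, z.  The >= a persons of that intersection are thus covered by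
   k deviant sets, hence for some group i and question s at least a/k of the
   n/k members of V_i answer s against mu_i(s).  That count is
   Binomial(n/k, p); the Chernoff bound together with Hoeffding's lemma
   1 - p + p e^l <= exp(l p + l^2/8), at l = 4(alpha - p), bounds its tail by
   exp(-2 (alpha - p)^2 n/k), and a union bound over the k m pairs (i, s)
   concludes. *)

Lemma le_at0_of_derive_le0 (R : realType) (f df : R -> R) :
  (forall x : R, is_derive x (1 : R) f (df x)) -> (forall x, 0 < x -> df x <= 0) ->
  forall y, 0 <= y -> f y <= f 0.
Proof.
move=> f_df df_le0 y y_ge0.
apply: (@ler0_derive1_nincry R f 0) => // [x|].
- by rewrite in_itv /= andbT => x_gt0; rewrite derive1E derive_val; exact: df_le0.
- by apply: derivable_within_continuous => x _; have [] := f_df x.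
Qed.

Section Hoeffding.
Variables (R : realType) (p : R).
Hypotheses (p_ge0 : 0 <= p) (p_le1 : p <= 1).

Definition bern_mgf (l : R) := 1 - p + p * expR l.

Definition tilted_mean (l : R) := p * expR l / bern_mgf l.

Definition hoeffding_ratio (l : R) := bern_mgf l * expR (- (l * p + l ^+ 2 / 8)).

(* The logarithmic derivative of [hoeffding_ratio]. *)
Definition hoeffding_gap (l : R) := tilted_mean l - p - l / 4.

Lemma bern_mgf0 : bern_mgf 0 = 1.
Proof. by rewrite /bern_mgf expR0 mulr1 subrK. Qed.

Lemma bern_mgf_gt0 l : 0 < bern_mgf l.
Proof.
rewrite /bern_mgf; have e_gt0 := expR_gt0 l.
have [->|p_neq1] := eqVneq p 1; first lra.
have : p < 1 by rewrite lt_neqAle p_neq1 p_le1.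
have := mulr_ge0 p_ge0 (expR_ge0 l); lra.
Qed.

Lemma is_derive_bern_mgf x : is_derive x (1 : R) bern_mgf (p * expR x).
Proof. by apply: is_derive_eq; rewrite add0r mul1r. Qed.

Lemma is_derive_hoeffding_gap x :
  is_derive x (1 : R) hoeffding_gap (tilted_mean x - tilted_mean x ^+ 2 - 1 / 4).
Proof.
have mgf_neq0 := lt0r_neq0 (bern_mgf_gt0 x).
have ? := is_deriveV mgf_neq0 (is_derive_bern_mgf x).
by apply: is_derive_eq; rewrite /tilted_mean /GRing.scale /=; field.
Qed.

Lemma hoeffding_gap_le0 l : 0 <= l -> hoeffding_gap l <= 0.
Proof.
have gap0 : hoeffding_gap 0 = 0.
  by rewrite /hoeffding_gap /tilted_mean bern_mgf0 expR0 mulr1 divr1 subrr mul0r subr0.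
move=> l_ge0; rewrite -gap0.
apply: (le_at0_of_derive_le0 is_derive_hoeffding_gap) l_ge0 => x _.
by have := sqr_ge0 (tilted_mean x - 1 / 2); lra.
Qed.

Lemma is_derive_hoeffding_ratio x :
  is_derive x (1 : R) hoeffding_ratio (hoeffding_ratio x * hoeffding_gap x).
Proof.
have mgf_neq0 := lt0r_neq0 (bern_mgf_gt0 x).
have : is_derive x (1 : R) (fun l => - (l * p + l ^+ 2 / 8)) (- (p + x / 4)).
  by apply: is_derive_eq; rewrite /GRing.scale /=; field.
move=> /(is_derive1_comp (is_derive_expR _)) ?; have ? := is_derive_bern_mgf x.
by apply: is_derive_eq; rewrite /hoeffding_ratio /hoeffding_gap /tilted_mean /GRing.scale /=; field.
Qed.

Lemma bern_mgf_le_expR l : 0 <= l -> bern_mgf l <= expR (l * p + l ^+ 2 / 8).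
Proof.
move=> l_ge0; have : hoeffding_ratio l <= hoeffding_ratio 0.
  apply: (le_at0_of_derive_le0 is_derive_hoeffding_ratio) l_ge0 => x x_gt0.
  rewrite mulr_ge0_le0 ?hoeffding_gap_le0 ?ltW //.
  by rewrite mulr_gt0 ?expR_gt0 ?bern_mgf_gt0.
rewrite /hoeffding_ratio bern_mgf0 !(mul0r, expr0n, addr0, oppr0, expR0, mul1r).
by rewrite expRN ler_pdivrMr ?expR_gt0 // mul1r.
Qed.

End Hoeffding.

Section FiniteWeights.
Variables (R : realType) (T : finType) (P : T -> R).
Hypothesis P_ge0 : forall w, 0 <= P w.

Lemma chernoff_fin (X : T -> R) (l t : R) : 0 <= l ->
  \sum_(w | t <= X w) P w <= expR (- (l * t)) * \sum_w P w * expR (l * X w).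
Proof.
move=> l_ge0; rewrite mulr_sumr big_mkcond /=; apply: ler_sum => w _.
have Pe_ge0 : 0 <= expR (- (l * t)) * (P w * expR (l * X w)).
  by rewrite !mulr_ge0 ?expR_ge0.
case: ifP => // t_le; rewrite mulrCA -expRD -[leLHS]mulr1 ler_wpM2l //.
have : 0 <= l * (X w - t) by rewrite mulr_ge0 // subr_ge0.
by rewrite -expR0 ler_expR; lra.
Qed.

Lemma union_bound (I : finType) (B : pred T) (A : I -> pred T) :
  (forall w, B w -> exists i, A i w) ->
  \sum_(w | B w) P w <= \sum_i \sum_(w | A i w) P w.
Proof.
move=> cover; rewrite (exchange_big_dep xpredT) //= [leRHS](bigID B) /= -[leLHS]addr0.
apply: lerD; last by do 2![apply: sumr_ge0 => ? _].
apply: ler_sum => w /cover [i Aiw].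
by rewrite (bigD1 i) //= lerDl sumr_ge0.
Qed.

End FiniteWeights.

Lemma exists_ge_mean (R : realDomainType) (I : finType) (x : I -> R) (a : R) :
  (0 < #|I|)%N -> a <= \sum_i x i -> exists i, a <= #|I|%:R * x i.
Proof.
move=> I_gt0 a_le; apply/existsP; apply: contraLR a_le => /existsPn x_lt.
have [i0 _] := card_gt0P I_gt0.
rewrite -ltNge -(@ltr_pM2l _ #|I|%:R) ?ltr0n // mulr_sumr.
have -> : #|I|%:R * a = \sum_(i : I) a by rewrite sumr_const mulr_natl.
apply: ltr_sum => [|i _]; last by rewrite ltNge x_lt.
by apply/hasP; exists i0; rewrite ?mem_index_enum.
Qed.

Section Deviants.
Variables (R : realType) (n m k : nat) (mu : 'I_k -> {ffun 'I_m -> bool}) (c : 'I_n -> 'I_k).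

Definition deviants (i : 'I_k) (s : 'I_m) (w : answers n m) : {set 'I_n} :=
  [set v | (c v == i) && (w (v, s) != mu i s)].

Lemma not_mindset_triple (tau : {ffun 'I_m -> bool}) :
  mindsets_nondegenerate mu -> (forall j, tau != mu j) ->
  exists x y z : 'I_m, forall i, exists2 s, s \in [:: x; y; z] & tau s != mu i s.
Proof.
move=> nondeg tau_new.
have : ~~ [forall x, forall y, forall z, exists i,
    [&& tau x == mu i x, tau y == mu i y & tau z == mu i z]].
  apply/negP => /forallP agree; have [j tau_j] : exists j, tau = mu j.
    apply: nondeg => x y z.
    have /forallP/(_ y)/forallP/(_ z)/existsP [i /and3P [/eqP ? /eqP ? /eqP ?]] := agree x.
    by exists i.
  by move: (tau_new j); rewrite tau_j eqxx.
move=> /forallPn [x /forallPn [y /forallPn [z /existsPn disagree]]].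
exists x, y, z => i; move: (disagree i); rewrite !negb_and.
by case/or3P => ?; [exists x | exists y | exists z]; rewrite ?inE ?eqxx ?orbT.
Qed.

Lemma card_triple_le_deviants (w : answers n m) (tau : {ffun 'I_m -> bool})
    (x y z : 'I_m) (sel : 'I_k -> 'I_m) :
  (forall i, sel i \in [:: x; y; z]) -> (forall i, tau (sel i) != mu i (sel i)) ->
  (#|side w x (tau x) :&: side w y (tau y) :&: side w z (tau z)|
     <= \sum_i #|deviants i (sel i) w|)%N.
Proof.
move=> sel_xyz sel_dev; rewrite -sum1_card (partition_big c xpredT) //=.
apply: leq_sum => i _; rewrite sum1_card; apply: subset_leq_card; apply/subsetP => v.
rewrite unfold_in /= !inE => /andP [/andP [/andP [wx wy] wz] /eqP ->]; rewrite eqxx /=.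
have := sel_dev i; have := sel_xyz i; rewrite !inE.
by case/or3P => /eqP ->; [rewrite (eqP wx) | rewrite (eqP wy) | rewrite (eqP wz)].
Qed.

Lemma bad_event_deviants (a : R) (w : answers n m) :
  (0 < k)%N -> mindsets_nondegenerate mu -> bad_event a mu w ->
  exists i s, a <= k%:R * #|deviants i s w|%:R.
Proof.
move=> k_gt0 nondeg /existsP [tau /andP [tangle /forallP tau_new]].
have [x [y [z disagree]]] := not_mindset_triple nondeg tau_new.
have [sel sel_xyz sel_dev] := fin_all_exists2 disagree.
have [i a_le] : exists i, a <= #|'I_k|%:R * #|deviants i (sel i) w|%:R.
  apply: exists_ge_mean; first by rewrite card_ord.
  move: tangle => /forallP/(_ x)/forallP/(_ y)/forallP/(_ z) /le_trans; apply.
  by rewrite -natr_sum ler_nat card_triple_le_deviants.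
by exists i, (sel i); rewrite card_ord in a_le.
Qed.

Variable p : R.
Hypotheses (p_ge0 : 0 <= p) (p_le1 : p <= 1).

Lemma weight_ge0 (w : answers n m) : 0 <= weight p mu c w.
Proof. by apply: prodr_ge0 => vs _; case: ifP; rewrite ?subr_ge0. Qed.

Lemma sum_weight_prod (f : 'I_n * 'I_m -> bool -> R) :
  \sum_(w : answers n m) weight p mu c w * \prod_vs f vs (w vs) =
  \prod_vs \sum_b (if b == mu (c vs.1) vs.2 then 1 - p else p) * f vs b.
Proof. by rewrite bigA_distr_bigA; apply: eq_bigr => w _; rewrite /weight -big_split. Qed.

Lemma card_deviants i s w : #|deviants i s w| =
  (\sum_(vs : 'I_n * 'I_m) [&& vs.2 == s, c vs.1 == i & w vs != mu i s])%N.
Proof.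
transitivity (\sum_v \sum_s' [&& s' == s, c v == i & w (v, s') != mu i s])%N; last first.
  by rewrite pair_bigA; apply: eq_bigr => -[v s'].
rewrite -sum1_card big_mkcond; apply: eq_bigr => v _.
rewrite (bigD1 s) //= eqxx big1 ?addn0 => [|s' /negbTE -> //].
by rewrite inE; case: ifP.
Qed.

Lemma sum_weight_expR_deviants (l : R) i s :
  \sum_(w : answers n m) weight p mu c w * expR (l * #|deviants i s w|%:R) =
  bern_mgf p l ^+ #|[set v | c v == i]|.
Proof.
under eq_bigr => w _ do rewrite card_deviants natr_sum mulr_sumr expR_sum.
rewrite (sum_weight_prod (fun vs b =>
  expR (l * [&& vs.2 == s, c vs.1 == i & b != mu i s]%:R))).
transitivity (\prod_v \prod_s' (if (s' == s) && (c v == i) then bern_mgf p l else 1)).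
  rewrite pair_bigA; apply: eq_bigr => -[v s'] _; rewrite big_bool /=.
  case: (s' =P s) => [->|_]; case: (c v =P i) => [<-|_] /=;
    case: (mu (c v) _); rewrite /bern_mgf /= ?mulr0 ?mulr1 ?expR0 ?mulr1; lra.
rewrite -prodr_const [RHS]big_mkcond; apply: eq_bigr => v _.
rewrite (bigD1 s) //= eqxx big1 ?mulr1 => [|s' /negbTE -> //].
by rewrite inE.
Qed.

Lemma deviants_tail (alpha : R) i s : p <= alpha ->
  \sum_(w | alpha * #|[set v | c v == i]|%:R <= #|deviants i s w|%:R) weight p mu c w
    <= expR (- (2 * (alpha - p) ^+ 2 * #|[set v | c v == i]|%:R)).
Proof.
move=> p_le_alpha; set N := #|[set v | c v == i]|; set l := 4 * (alpha - p).
have l_ge0 : 0 <= l by rewrite /l; lra.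
apply: le_trans (chernoff_fin weight_ge0 _ _ l_ge0) _.
rewrite sum_weight_expR_deviants -/N.
have mgf_le := lerXn2r N (ltW (bern_mgf_gt0 p_ge0 p_le1 l)) (expR_ge0 _)
  (bern_mgf_le_expR p_ge0 p_le1 l_ge0).
apply: le_trans (ler_wpM2l (expR_ge0 _) mgf_le) _.
by rewrite -expRM_natl -expRD ler_expR /l; lra.
Qed.

End Deviants.

Theorem lemma2 (R : realType) (n m k : nat) (p alpha : R)
    (mu : 'I_k -> {ffun 'I_m -> bool}) (c : 'I_n -> 'I_k) :
  (0 < n)%N -> (0 < m)%N -> (0 < k)%N -> (k %| n)%N ->
  0 < p -> p < 1 / 2 ->
  mindsets_nondegenerate mu ->
  (forall i : 'I_k, #|[set v | c v == i]| = (n %/ k)%N) ->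
  p < (alpha * n%:R) / n%:R ->
  prob_bad p (alpha * n%:R) mu c <=
    k%:R * m%:R * expR (- (2 * (alpha - p) ^+ 2 * n%:R / k%:R)).
Proof.
move=> n_gt0 _ k_gt0 k_dvd_n p_gt0 p_lt_half nondeg group_size p_lt.
have p_le1 : p <= 1 by lra.
have p_lt_alpha : p < alpha by move: p_lt; rewrite mulfK // pnatr_eq0 -lt0n.
have k_gt0R : (0 : R) < k%:R by rewrite ltr0n.
set N := (n %/ k)%N; have n_eq : n%:R = N%:R * k%:R :> R by rewrite -natrM divnK.
have -> : 2 * (alpha - p) ^+ 2 * n%:R / k%:R = 2 * (alpha - p) ^+ 2 * N%:R.
  by rewrite n_eq mulrA mulfK // lt0r_neq0.
apply: le_trans (union_bound (weight_ge0 mu c (ltW p_gt0) p_le1)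
  (A := fun qs w => alpha * N%:R <= #|deviants mu c qs.1 qs.2 w|%:R) _) _.
  move=> w /(bad_event_deviants c k_gt0 nondeg) [i [s]]; rewrite n_eq => dev_ge.
  by exists (i, s) => /=; nra.
have tail (qs : 'I_k * 'I_m) :
    \sum_(w | alpha * N%:R <= #|deviants mu c qs.1 qs.2 w|%:R) weight p mu c w
      <= expR (- (2 * (alpha - p) ^+ 2 * N%:R)).
  by rewrite /N -(group_size qs.1); apply: deviants_tail => //; exact: ltW.
apply: le_trans (ler_sum _ (fun qs _ => tail qs)) _.
by rewrite sumr_const card_prod !card_ord -natrM [leRHS]mulr_natl.
Qed.
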